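(* Let $A$ be an $n\times m$ real matrix with $n\ge 2$ and $m\geq2$, and suppose that for some $k$ the $k$th column of $A$ has exactly one nonzero entry. Let $\tilde A$ be the $n\times(m-1)$ matrix obtained from $A$ by deleting its $k$th column. Then $G^{[2]}_{\tilde A,\tilde A^t}$ is odd$^*$ (respectively odd, respectively steady) if and only if $G^{[2]}_{A,A^t}$ is odd$^*$ (respectively odd, respectively steady).
   Context: DSR graphs: for $P\in\mathbb{R}^{n\times m}$, $Q\in\mathbb{R}^{m\times n}$, $G_{P,Q}$ is the signed, labelled bipartite digraph with S-vertices $S_1,\dots,S_n$ and R-vertices $R_1,\dots,R_m$, with an arc $R_j\to S_i$ of sign $\mathrm{sign}(P_{ij})$ iff $P_{ij}\ne0$ and an arc $S_i\to R_j$ of sign $\mathrm{sign}(Q_{ji})$ iff $Q_{ji}\ne0$; antiparallel arcs of equal sign are merged into a single undirected edge. An edge arising from $P_{ij}\ne0$ (R-to-S or undirected) has label $|P_{ij}|$; an edge with only S-to-R orientation has label $\infty$. Walks traverse edges consistently with orientation; a cycle is a nonempty closed walk repeating no vertex except first$=$last. The parity of a cycle $W$ is $(-1)^{|W|/2}\mathrm{sign}(W)$ ($|W|$ = length, $\mathrm{sign}(W)$ = product of edge signs); e-cycles have parity $1$. A cycle $(e_1,\dots,e_{2r})$ is an s-cycle if all labels are finite and $\prod l(e_{2i-1})=\prod l(e_{2i})$. Two cycles have odd intersection if they can be oriented so as to induce the same direction on every common edge and each connected component of their intersection has odd length. A DSR graph is odd if it has no e-cycles; odd$^*$ if all e-cycles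 are s-cycles and no two e-cycles have odd intersection; steady if all cycles are s-cycles. DSR$^{[2]}$ graph: for $A\in\mathbb{R}^{n\times m}$, $B\in\mathbb{R}^{m\times n}$, $n\ge2$, let $\overline{\mathbf L}^A\in\mathbb{R}^{\binom n2\times mn}$ (rows $(i,j)$, $i<j$; columns $(k,l)$, $1\le k\le m$, $1\le l\le n$) have entries $A_{jk}$ if $l=i$, $-A_{ik}$ if $l=j$, $0$ otherwise, and $\underline{\mathbf L}^B\in\mathbb{R}^{mn\times\binom n2}$ have $(k,l),(i,j)$ entry $B_{kj}$ if $l=i$, $-B_{ki}$ if $l=j$, $0$ otherwise. Then $G^{[2]}_{A,B}:=G_{\overline{\mathbf L}^A,\underline{\mathbf L}^B}$. *)

From HB Require Import structures.
From mathcomp Require Import all_boot all_order all_algebra.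
Set Implicit Arguments. Unset Strict Implicit. Unset Printing Implicit Defensive.
Import Order.TTheory GRing.Theory Num.Theory.
Local Open Scope ring_scope.

(* General DSR graph G_{P,Q}.  S-vertices are indexed by a finite type Sv,  *)
(* R-vertices by a finite type Rv; P s r plays the role of P_{sr} and       *)
(* Q r s the role of Q_{rs}.                                                *)
(* Edges are triples (s, r, b) : Sv * Rv * bool:                            *)
(*  - (s, r, true)  = the edge coming from P_{sr} <> 0 (R-to-S arc, merged  *)
(*    into an undirected edge when Q_{rs} has the same sign); label |P_sr|; *)
(*  - (s, r, false) = the S-to-R arc coming from Q_{rs} <> 0 when it is NOT *)
(*    merged (i.e. sign Q_rs <> sign P_rs); label infinity.                 *)
Section DSR.
Variables (R : realFieldType) (Sv Rv : finType).
Variables (P : Sv -> Rv -> R) (Q : Rv -> Sv -> R).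

Definition dsr_edgeT := (Sv * Rv * bool)%type.
Definition dsr_vertex := (Sv + Rv)%type.
(* a traversal of an edge: (edge, dir), dir = true means S-to-R *)
Definition dsr_trav := (dsr_edgeT * bool)%type.

Definition dsr_edge (e : dsr_edgeT) : bool :=
  let: (s, r, b) := e in
  if b then P s r != 0
  else (Q r s != 0) && (Num.sg (Q r s) != Num.sg (P s r)).

Definition edge_sign (e : dsr_edgeT) : R :=
  let: (s, r, b) := e in if b then Num.sg (P s r) else Num.sg (Q r s).

(* None stands for the label infinity *)
Definition edge_label (e : dsr_edgeT) : option R :=
  let: (s, r, b) := e in if b then Some `|P s r| else None.

(* traversal consistent with orientation *)
Definition trav_ok (t : dsr_trav) : bool :=
  let: ((s, r, b), dir) := t in
  dsr_edge (s, r, b) &&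
  (if dir then (if b then Num.sg (Q r s) == Num.sg (P s r) else true) else b).

Definition trav_tail (t : dsr_trav) : dsr_vertex :=
  let: ((s, r, _), dir) := t in if dir then inl s else inr r.
Definition trav_head (t : dsr_trav) : dsr_vertex :=
  let: ((s, r, _), dir) := t in if dir then inr r else inl s.

Definition is_cycle (c : seq dsr_trav) : bool :=
  [&& (0 < size c)%N, all trav_ok c,
      cycle (fun t u => trav_head t == trav_tail u) c,
      uniq (map trav_tail c) & uniq (map fst c)].

Definition cycle_sign (c : seq dsr_trav) : R := \prod_(t <- c) edge_sign t.1.

Definition cycle_parity (c : seq dsr_trav) : R :=
  (-1) ^+ (size c)./2 * cycle_sign c.

Definition e_cycle (c : seq dsr_trav) : bool :=
  is_cycle c && (cycle_parity c == 1).

(* s-cycle: all labels finite and product of labels of edges in odd        *)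
(* positions (1-indexed: e_1, e_3, ...) equals that of even positions.     *)
Definition s_cycle (c : seq dsr_trav) : bool :=
  [&& is_cycle c,
      all (fun t => edge_label t.1 != None) c &
      \prod_(p <- zip (iota 0 (size c)) c | ~~ odd p.1) odflt 0 (edge_label p.2.1)
      == \prod_(p <- zip (iota 0 (size c)) c | odd p.1) odflt 0 (edge_label p.2.1)].

Definition cyc_edges (c : seq dsr_trav) := map fst c.
Definition cyc_verts (c : seq dsr_trav) := map trav_tail c.

Definition same_cycle (c d : seq dsr_trav) : Prop := cyc_edges c =i cyc_edges d.

Definition dir_agree (c d : seq dsr_trav) : bool :=
  all (fun t => all (fun u => (t.1 == u.1) ==> (t.2 == u.2)) d) c.

Definition common_edge (c d : seq dsr_trav) (e : dsr_edgeT) : bool :=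
  (e \in cyc_edges c) && (e \in cyc_edges d).
Definition common_vert (c d : seq dsr_trav) (v : dsr_vertex) : bool :=
  (v \in cyc_verts c) && (v \in cyc_verts d).

Definition edge_ends (e : dsr_edgeT) : dsr_vertex * dsr_vertex :=
  (inl e.1.1, inr e.1.2).

Definition inter_adj (c d : seq dsr_trav) : rel dsr_vertex :=
  fun x y => [exists e, common_edge c d e &&
                ((edge_ends e == (x, y)) || (edge_ends e == (y, x)))].

Definition comp_length (c d : seq dsr_trav) (v : dsr_vertex) : nat :=
  #|[set e | common_edge c d e && connect (inter_adj c d) v (edge_ends e).1]|.

Definition odd_intersection (c d : seq dsr_trav) : Prop :=
  exists c' d', [/\ is_cycle c', is_cycle d', same_cycle c c', same_cycle d d'
    & [&& dir_agree c' d',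
       [exists v, common_vert c' d' v] &
       [forall v, common_vert c' d' v ==> odd (comp_length c' d' v)]]].

Definition dsr_odd : Prop := forall c, ~~ e_cycle c.

Definition dsr_odd_star : Prop :=
  (forall c, e_cycle c -> s_cycle c) /\
  (forall c d, e_cycle c -> e_cycle d -> ~ odd_intersection c d).

Definition dsr_steady : Prop := forall c, is_cycle c -> s_cycle c.

End DSR.

(* DSR^[2] graph.  Rows (i,j), i<j, are indexed by pairs2 n; columns (k,l)  *)
(* by 'I_m * 'I_n.                                                          *)
Definition pairs2 (n : nat) := {p : 'I_n * 'I_n | (p.1 < p.2)%N}.

Definition L2bar (R : ringType) (n m : nat) (A : 'M[R]_(n, m))
    (p : pairs2 n) (kl : 'I_m * 'I_n) : R :=
  let i := (val p).1 in let j := (val p).2 in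
  let k := kl.1 in let l := kl.2 in
  if l == i then A j k else if l == j then - A i k else 0.

Definition L2under (R : ringType) (n m : nat) (B : 'M[R]_(m, n))
    (kl : 'I_m * 'I_n) (p : pairs2 n) : R :=
  let i := (val p).1 in let j := (val p).2 in
  let k := kl.1 in let l := kl.2 in
  if l == i then B k j else if l == j then - B k i else 0.

(* G^[2]_{A,B} is the DSR graph G_{L2bar A, L2under B}; the predicates     *)
Definition dsr2_odd (R : realFieldType) n m (A : 'M[R]_(n, m)) (B : 'M[R]_(m, n)) :=
  dsr_odd (L2bar A) (L2under B).
Definition dsr2_odd_star (R : realFieldType) n m (A : 'M[R]_(n, m)) (B : 'M[R]_(m, n)) :=
  dsr_odd_star (L2bar A) (L2under B).
Definition dsr2_steady (R : realFieldType) n m (A : 'M[R]_(n, m)) (B : 'M[R]_(m, n)) :=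
  dsr_steady (L2bar A) (L2under B).

(* In G^[2]_{A,A^t} every edge is undirected, the second matrix being the
   transpose of the first.  If column k of A has its only nonzero entry in
   row i0, the R-vertex (k,l) is therefore adjacent to the single S-vertex
   {l,i0}, and a vertex of degree at most one lies on no cycle.  Hence the
   cycles of G^[2]_{A,A^t} are exactly those of its subgraph G^[2]_{A',A'^t},
   A' being A without column k, i.e. the subgraph without the R-vertices
   (k,l).  Being odd, odd* or steady depends only on the cycles with their
   signs, labels and intersections, all of which this embedding preserves. *)

From HB Require Import structures.
From mathcomp Require Import all_boot all_order all_algebra.
Set Implicit Arguments. Unset Strict Implicit. Unset Printing Implicit Defensive.
Import Order.TTheory GRing.Theory Num.Theory.
Local Open Scope ring_scope.

Lemma homo_connect (T U : finType) (f : T -> U) (e : rel T) (e' : rel U) :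
  {homo f : x y / e x y >-> e' x y} ->
  {homo f : x y / connect e x y >-> connect e' x y}.
Proof.
move=> fe x y /connectP[p ep ->]; elim: p x ep => [|z p IHp] x /=.
  by rewrite connect0.
by case/andP=> /fe/connect1/connect_trans fxz /IHp; apply: fxz.
Qed.

Lemma uniq_map_inj_in (T U : eqType) (f : T -> U) (s : seq T) :
  uniq (map f s) -> {in s &, injective f}.
Proof.
elim: s => //= z s IHs /andP[fz_notin fs_uniq] x y; rewrite !inE.
case/predU1P=> [->|xs]; case/predU1P=> [->|ys] // fxy.
- by rewrite fxy map_f in fz_notin.
- by rewrite -fxy map_f in fz_notin.
- exact: IHs.
Qed.

Lemma eq_mem_map_inj (T U : eqType) (f : T -> U) (s1 s2 : seq T) :
  injective f -> (map f s1 =i map f s2) <-> (s1 =i s2).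
Proof.
move=> f_inj; split=> [Es x|]; last exact: eq_mem_map.
by rewrite -(mem_map f_inj) Es mem_map.
Qed.

Lemma zip_mapr (S T U : Type) (f : T -> U) (s : seq S) (t : seq T) :
  zip s (map f t) = map (fun p => (p.1, f p.2)) (zip s t).
Proof. by elim: s t => [|x s IHs] [|y t] //=; rewrite IHs. Qed.

Lemma trav_headE (Sv Rv : finType) (t : dsr_trav Sv Rv) :
  trav_head t = if t.2 then inr t.1.1.2 else inl t.1.1.1.
Proof. by case: t => [[[s r] b] []]. Qed.

Lemma trav_tailE (Sv Rv : finType) (t : dsr_trav Sv Rv) :
  trav_tail t = if t.2 then inl t.1.1.1 else inr t.1.1.2.
Proof. by case: t => [[[s r] b] []]. Qed.

Lemma trav_ok_edge (R : realFieldType) (Sv Rv : finType) P Q (t : dsr_trav Sv Rv) :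
  trav_ok (R:=R) P Q t -> dsr_edge P Q t.1.
Proof. by case: t => [[[s r] b] d] /andP[]. Qed.

Lemma cycle_avoids_pendant (R : realFieldType) (Sv Rv : finType)
    (P : Sv -> Rv -> R) (Q : Rv -> Sv -> R) (r : Rv) (c : seq (dsr_trav Sv Rv)) t :
  (forall e e', dsr_edge P Q e -> dsr_edge P Q e' -> e.1.2 = r -> e'.1.2 = r -> e = e') ->
  is_cycle P Q c -> t \in c -> t.1.1.2 != r.
Proof.
move=> pendant /and5P[_ c_ok c_cycle _ c_uniq] tc; apply/eqP => tr.
(* some traversal w enters r; the next one leaves r, along the same edge *)
have [w wc w_head] : exists2 w, w \in c & trav_head w = inr r.
  case t_dir: t.2; first by exists t; rewrite // trav_headE t_dir tr.
  exists (prev c t); first by rewrite mem_prev.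
  by rewrite (eqP (prev_cycle c_cycle tc)) trav_tailE t_dir tr.
have uc : next c w \in c by rewrite mem_next.
have u_tail : trav_tail (next c w) = inr r by rewrite -(eqP (next_cycle c_cycle wc)).
move: w_head u_tail; rewrite trav_headE trav_tailE.
case w_dir: w.2 => // -[wr]; case u_dir: (next c w).2 => // -[ur].
have same_edge := pendant _ _ (trav_ok_edge (allP c_ok _ wc))
  (trav_ok_edge (allP c_ok _ uc)) wr ur.
by move: u_dir; rewrite -(uniq_map_inj_in c_uniq wc uc same_edge) w_dir.
Qed.

(** * Relabelling R-vertices *)

Definition relabel_edge (Sv Ra Rb : finType) (f : Ra -> Rb) (e : dsr_edgeT Sv Ra) :
  dsr_edgeT Sv Rb := (e.1.1, f e.1.2, e.2).
Definition relabel_trav (Sv Ra Rb : finType) (f : Ra -> Rb) (t : dsr_trav Sv Ra) :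
  dsr_trav Sv Rb := (relabel_edge f t.1, t.2).
Definition relabel_vertex (Sv Ra Rb : finType) (f : Ra -> Rb) (v : dsr_vertex Sv Ra) :
  dsr_vertex Sv Rb := match v with inl s => inl s | inr r => inr (f r) end.

Section Relabel.
Variables (R : realFieldType) (Sv Rs Rb : finType).
Variables (P : Sv -> Rb -> R) (Q : Rb -> Sv -> R).
Variables (P' : Sv -> Rs -> R) (Q' : Rs -> Sv -> R).
Variables (h : Rs -> Rb) (g : Rb -> Rs).
Hypothesis hK : cancel h g.
Hypothesis P'E : forall s r, P' s r = P s (h r).
Hypothesis Q'E : forall r s, Q' r s = Q (h r) s.

Local Notation he := (relabel_edge (Sv:=Sv) h).
Local Notation ht := (relabel_trav (Sv:=Sv) h).
Local Notation hv := (relabel_vertex (Sv:=Sv) h).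
Local Notation gv := (relabel_vertex (Sv:=Sv) g).

Lemma relabel_edgeK : cancel he (relabel_edge g).
Proof. by case=> [[s r] b]; rewrite /relabel_edge /= hK. Qed.

Lemma relabel_edge_inj : injective he.
Proof. exact: can_inj relabel_edgeK. Qed.

Lemma relabel_vertexK : cancel hv gv.
Proof. by case=> //= r; rewrite hK. Qed.

Lemma relabel_vertex_inj : injective hv.
Proof. exact: can_inj relabel_vertexK. Qed.

Lemma trav_ok_relabel t : trav_ok P Q (ht t) = trav_ok P' Q' t.
Proof. by case: t => [[[s r] b] d]; rewrite /= P'E Q'E. Qed.

Lemma trav_head_relabel t : trav_head (ht t) = hv (trav_head t).
Proof. by case: t => [[[s r] b] []]. Qed.

Lemma trav_tail_relabel t : trav_tail (ht t) = hv (trav_tail t).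
Proof. by case: t => [[[s r] b] []]. Qed.

Lemma edge_sign_relabel e : edge_sign P Q (he e) = edge_sign P' Q' e.
Proof. by case: e => [[s r] []]; rewrite /= ?P'E ?Q'E. Qed.

Lemma edge_label_relabel e : edge_label P (he e) = edge_label P' e.
Proof. by case: e => [[s r] []]; rewrite /= ?P'E. Qed.

Lemma cyc_edges_relabel c : cyc_edges (map ht c) = map he (cyc_edges c).
Proof. by rewrite /cyc_edges -!map_comp. Qed.

Lemma cyc_verts_relabel c : cyc_verts (map ht c) = map hv (cyc_verts c).
Proof. by rewrite /cyc_verts -!map_comp; apply: eq_map => t; apply: trav_tail_relabel. Qed.

Lemma is_cycle_relabel c : is_cycle P Q (map ht c) = is_cycle P' Q' c.
Proof.
rewrite /is_cycle size_map all_map (eq_all trav_ok_relabel).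
rewrite [map _ (map _ _)]cyc_verts_relabel (map_inj_uniq relabel_vertex_inj).
rewrite [map fst _]cyc_edges_relabel (map_inj_uniq relabel_edge_inj).
congr [&& _, _, _, _ & _]; rewrite cycle_map; apply: eq_cycle => t u.
by rewrite -(inj_eq relabel_vertex_inj) -trav_head_relabel -trav_tail_relabel.
Qed.

Lemma cycle_sign_relabel c : cycle_sign P Q (map ht c) = cycle_sign P' Q' c.
Proof. by rewrite /cycle_sign big_map; apply: eq_bigr => t _; apply: edge_sign_relabel. Qed.

Lemma e_cycle_relabel c : e_cycle P Q (map ht c) = e_cycle P' Q' c.
Proof. by rewrite /e_cycle is_cycle_relabel /cycle_parity cycle_sign_relabel size_map. Qed.

Lemma s_cycle_relabel c : s_cycle P Q (map ht c) = s_cycle P' Q' c.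
Proof.
rewrite /s_cycle is_cycle_relabel all_map size_map zip_mapr !big_map.
congr [&& _, _ & _]; first by apply: eq_all => t; rewrite -edge_label_relabel.
by congr (_ == _); apply: eq_bigr => t _; rewrite -edge_label_relabel.
Qed.

Lemma common_edge_relabel c d e :
  common_edge (map ht c) (map ht d) (he e) = common_edge c d e.
Proof. by rewrite /common_edge !cyc_edges_relabel !(mem_map relabel_edge_inj). Qed.

Lemma common_edge_relabel_image c d e :
  common_edge (map ht c) (map ht d) e -> exists e', e = he e'.
Proof. by rewrite /common_edge cyc_edges_relabel => /andP[/mapP[e' _ ->] _]; exists e'. Qed.

Lemma common_vert_relabel c d v :
  common_vert (map ht c) (map ht d) (hv v) = common_vert c d v.
Proof. by rewrite /common_vert !cyc_verts_relabel !(mem_map relabel_vertex_inj). Qed.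

Lemma common_vert_relabel_image c d v :
  common_vert (map ht c) (map ht d) v -> exists v', v = hv v'.
Proof. by rewrite /common_vert cyc_verts_relabel => /andP[/mapP[v' _ ->] _]; exists v'. Qed.

Lemma edge_ends_relabel e : edge_ends (he e) = (hv (edge_ends e).1, hv (edge_ends e).2).
Proof. by case: e => [[s r] b]. Qed.

Lemma inter_adj_relabel c d x y :
  inter_adj (map ht c) (map ht d) (hv x) (hv y) = inter_adj c d x y.
Proof.
apply/existsP/existsP => -[e /andP[ce ends_e]].
- have [e' ee'] := common_edge_relabel_image ce; subst e.
  exists e'; rewrite -common_edge_relabel ce /=.
  move: ends_e; rewrite edge_ends_relabel !xpair_eqE !(inj_eq relabel_vertex_inj).
  by rewrite -!xpair_eqE -!surjective_pairing.
- exists (he e); rewrite common_edge_relabel ce /= edge_ends_relabel.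
  by rewrite !xpair_eqE !(inj_eq relabel_vertex_inj) -!xpair_eqE -!surjective_pairing.
Qed.

Lemma inter_adj_unrelabel c d a b :
  inter_adj (map ht c) (map ht d) a b -> inter_adj c d (gv a) (gv b).
Proof.
case/existsP=> e /andP[ce ends_e]; have [e' ee'] := common_edge_relabel_image ce.
subst e; apply/existsP; exists e'; rewrite -common_edge_relabel ce /=.
by case/orP: ends_e; rewrite edge_ends_relabel => /eqP[<- <-]; rewrite /= hK eqxx ?orbT.
Qed.

Lemma connect_inter_adj_relabel c d x y :
  connect (inter_adj (map ht c) (map ht d)) (hv x) (hv y) = connect (inter_adj c d) x y.
Proof.
apply/idP/idP => [|xy].
  by rewrite -{2}(relabel_vertexK x) -{2}(relabel_vertexK y);
    apply: homo_connect => a b; apply: inter_adj_unrelabel.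
by apply: homo_connect xy => a b; rewrite inter_adj_relabel.
Qed.

Lemma comp_length_relabel c d v :
  comp_length (map ht c) (map ht d) (hv v) = comp_length c d v.
Proof.
rewrite /comp_length -(card_imset _ relabel_edge_inj); apply: eq_card => e.
rewrite inE; case ce: (common_edge _ _ e) => /=.
  have [e' ee'] := common_edge_relabel_image ce; subst e.
  rewrite (mem_imset _ _ relabel_edge_inj) inE -common_edge_relabel ce.
  by rewrite -(connect_inter_adj_relabel c d).
apply/esym/imsetP => -[e']; rewrite inE => /andP[ce' _] ee'.
by rewrite ee' common_edge_relabel ce' in ce.
Qed.

Lemma same_cycle_relabel c d : same_cycle (map ht c) (map ht d) <-> same_cycle c d.
Proof. by rewrite /same_cycle !cyc_edges_relabel; apply: eq_mem_map_inj relabel_edge_inj. Qed.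

Lemma dir_agree_relabel c d : dir_agree (map ht c) (map ht d) = dir_agree c d.
Proof.
rewrite /dir_agree all_map; apply: eq_all => t /=.
by rewrite all_map; apply: eq_all => u /=; rewrite (inj_eq relabel_edge_inj).
Qed.

Lemma odd_intersection_relabel c d :
  odd_intersection P' Q' c d -> odd_intersection P Q (map ht c) (map ht d).
Proof.
case=> c' [d' [cyc_c' cyc_d' cc' dd' /and3P[agree ex_v odd_v]]].
exists (map ht c'), (map ht d'); rewrite !is_cycle_relabel.
split=> //; try exact/same_cycle_relabel; apply/and3P; split; first by rewrite dir_agree_relabel.
  by case/existsP: ex_v => v cv; apply/existsP; exists (hv v); rewrite common_vert_relabel.
apply/forallP => v; apply/implyP => cv; have [v' vv'] := common_vert_relabel_image cv.
by subst v; rewrite comp_length_relabel (implyP (forallP odd_v v')) -?common_vert_relabel.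
Qed.

Lemma relabel_preimage c :
  {in c, forall t, t.1.1.2 \in codom h} -> c = map ht (map (relabel_trav g) c).
Proof.
move=> c_in_codom; rewrite -map_comp map_id_in // => -[[[s r] b] dir] /c_in_codom.
by case/codomP=> /= r' ->; rewrite /relabel_trav /relabel_edge /= hK.
Qed.

Section CyclesInRange.
Hypothesis cycles_in_codom :
  forall c, is_cycle P Q c -> {in c, forall t, t.1.1.2 \in codom h}.

Lemma is_cycle_relabel_image c : is_cycle P Q c -> exists c', c = map ht c'.
Proof. by move=> cyc_c; exists (map (relabel_trav g) c); apply/relabel_preimage/cycles_in_codom. Qed.

Lemma odd_intersection_unrelabel c d :
  odd_intersection P Q (map ht c) (map ht d) -> odd_intersection P' Q' c d.
Proof.
case=> c1 [d1 [cyc_c1 cyc_d1 cc1 dd1 /and3P[agree ex_v odd_v]]].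
have [c' cc'] := is_cycle_relabel_image cyc_c1; have [d' dd'] := is_cycle_relabel_image cyc_d1.
subst c1 d1.
exists c', d'; rewrite -!is_cycle_relabel.
split=> //; try exact/same_cycle_relabel; apply/and3P; split; first by rewrite -dir_agree_relabel.
  case/existsP: ex_v => v cv; have [v' vv'] := common_vert_relabel_image cv.
  by apply/existsP; exists v'; rewrite -common_vert_relabel -vv'.
apply/forallP => v; apply/implyP => cv.
by rewrite -comp_length_relabel (implyP (forallP odd_v (hv v))) ?common_vert_relabel.
Qed.

Lemma dsr_odd_relabel : dsr_odd P Q <-> dsr_odd P' Q'.
Proof.
split=> odd_G c; first by rewrite -e_cycle_relabel.
apply/negP => /[dup] /andP[/is_cycle_relabel_image[c' ->] _].
by rewrite e_cycle_relabel (negPf (odd_G c')).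
Qed.

Lemma dsr_steady_relabel : dsr_steady P Q <-> dsr_steady P' Q'.
Proof.
split=> steady_G c cyc_c.
  by rewrite -s_cycle_relabel steady_G ?is_cycle_relabel.
have [c' cc'] := is_cycle_relabel_image cyc_c; subst c.
by rewrite s_cycle_relabel steady_G -?is_cycle_relabel.
Qed.

Lemma dsr_odd_star_relabel : dsr_odd_star P Q <-> dsr_odd_star P' Q'.
Proof.
split=> -[e_s_cycle no_odd_inter]; split.
- by move=> c ec; rewrite -s_cycle_relabel e_s_cycle ?e_cycle_relabel.
- move=> c d ec ed /odd_intersection_relabel.
  by apply: no_odd_inter; rewrite e_cycle_relabel.
- move=> c /[dup] /andP[/is_cycle_relabel_image[c' ->] _].
  by rewrite e_cycle_relabel s_cycle_relabel; apply: e_s_cycle.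
- move=> c d /[dup] /andP[/is_cycle_relabel_image[c' ->] _] ec.
  move=> /[dup] /andP[/is_cycle_relabel_image[d' ->] _] ed.
  move/odd_intersection_unrelabel; apply: no_odd_inter; by rewrite -e_cycle_relabel.
Qed.

End CyclesInRange.
End Relabel.

(** * Deleting a column with a single nonzero entry *)

Section SecondCompound.
Variables (R : realFieldType) (n m : nat) (A : 'M[R]_(n, m)).

Lemma L2under_trmx r s : L2under A^T r s = L2bar A s r.
Proof. by rewrite /L2under /L2bar !mxE. Qed.

Lemma L2bar_col' (k : 'I_m) s (c : 'I_m.-1) l :
  L2bar (col' k A) s (c, l) = L2bar A s (lift k c, l).
Proof. by rewrite /L2bar !mxE. Qed.

Variables (k : 'I_m) (i0 : 'I_n).
Hypothesis A_col_supp : forall i, (A i k != 0) = (i == i0).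

Lemma L2bar_col_neq0 s l :
  L2bar A s (k, l) != 0 -> (val s == (l, i0)) || (val s == (i0, l)).
Proof.
case: s => [[i j] ij]; rewrite /L2bar /=.
have [<-|_] := eqVneq l i; first by rewrite A_col_supp => /eqP ->; rewrite eqxx.
have [<-|_] := eqVneq l j; last by rewrite eqxx.
by rewrite oppr_eq0 A_col_supp => /eqP->; rewrite eqxx orbT.
Qed.

Lemma dsr2_col_pendant l (e e' : dsr_edgeT (pairs2 n) ('I_m * 'I_n)%type) :
  dsr_edge (L2bar A) (L2under A^T) e -> dsr_edge (L2bar A) (L2under A^T) e' ->
  e.1.2 = (k, l) -> e'.1.2 = (k, l) -> e = e'.
Proof.
case: e e' => [[s r] []] [[s' r'] []] /=; rewrite ?L2under_trmx ?eqxx /= ?andbF //.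
move=> + + rkl r'kl; subst r r' => /L2bar_col_neq0 es /L2bar_col_neq0 es'.
congr (_, _, _).
apply: val_inj; move: (valP s) (valP s').
case/orP: es => /eqP->; case/orP: es' => /eqP-> //=.
all: by move=> /ltn_trans lt /lt; rewrite ltnn.
Qed.

Lemma dsr2_cycle_avoids_col c t :
  is_cycle (L2bar A) (L2under A^T) c -> t \in c -> t.1.1.2.1 != k.
Proof.
move=> cyc_c tc; have := cycle_avoids_pendant (r := (k, t.1.1.2.2)) (@dsr2_col_pendant _) cyc_c tc.
by apply: contra => /eqP tk; rewrite [t.1.1.2]surjective_pairing tk.
Qed.

End SecondCompound.

Theorem lemma5p1 (R : realFieldType) (n m : nat) (A : 'M[R]_(n, m)) (k : 'I_m) :
  (2 <= n)%N -> (2 <= m)%N -> #|[set i | A i k != 0]| = 1%N ->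
  [/\ dsr2_odd_star (col' k A) (col' k A)^T <-> dsr2_odd_star A A^T,
      dsr2_odd (col' k A) (col' k A)^T <-> dsr2_odd A A^T &
      dsr2_steady (col' k A) (col' k A)^T <-> dsr2_steady A A^T].
Proof.
move=> _ m_ge2 /eqP/cards1P[i0 supp_k].
have A_col_supp i : (A i k != 0) = (i == i0) by rewrite -in_set1 -supp_k inE.
have m'_gt0 : (0 < m.-1)%N by case: m m_ge2 {k A supp_k A_col_supp} => [|[]].
pose h (r : 'I_m.-1 * 'I_n) := (lift k r.1, r.2).
pose g (r : 'I_m * 'I_n) := (odflt (Ordinal m'_gt0) (unlift k r.1), r.2).
have hK : cancel h g by case=> c l; rewrite /g /h /= liftK.
have P'E s r : L2bar (col' k A) s r = L2bar A s (h r) by case: r => c l; apply: L2bar_col'.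
have Q'E r s : L2under (col' k A)^T r s = L2under A^T (h r) s.
  by rewrite !L2under_trmx P'E.
have cycles_in_codom c : is_cycle (L2bar A) (L2under A^T) c -> {in c, forall t, t.1.1.2 \in codom h}.
  move=> cyc_c t /(dsr2_cycle_avoids_col A_col_supp cyc_c); case: t.1.1.2 => c0 l /=.
  by rewrite eq_sym => /unlift_some[c' -> _]; exact: (codom_f h (c', l)).
rewrite /dsr2_odd_star /dsr2_odd /dsr2_steady; split; apply: iff_sym.
- exact: dsr_odd_star_relabel hK P'E Q'E cycles_in_codom.
- exact: dsr_odd_relabel hK P'E Q'E cycles_in_codom.
- exact: dsr_steady_relabel hK P'E Q'E cycles_in_codom.
Qed.
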